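(* Let $U$ be a subgroup of $G^*$ and let $F$ be a $U$-symmetric matching mechanism. Then $F$ admits a refinement $H$ (a matching mechanism with $H(p)\subseteq F(p)$ for all $p\in\mathcal{P}$) that is $U$-symmetric and resolute if and only if $F(p)\cap C^U(p)\neq\varnothing$ for every $p\in\mathcal{P}$.
   Context: Fix $n\ge 2$, $W=\{1,\dots,n\}$, $M=\{n+1,\dots,2n\}$, $I=W\cup M$. Permutations compose right-to-left. A preference profile is a function $p$ on $I$ assigning to each $x\in W$ a linear order $p(x)$ on $M$ and to each $y\in M$ a linear order $p(y)$ on $W$; $\mathcal{P}$ is the set of preference profiles. A matching is a permutation $\mu$ of $I$ with $\mu(W)=M$, $\mu(M)=W$ and $\mu(\mu(z))=z$ for all $z$; $\mathcal{M}$ is the set of matchings. $G^*=\{\varphi\in\mathrm{Sym}(I):\{\varphi(W),\varphi(M)\}=\{W,M\}\}$. For a linear order $R$ on $X\subseteq I$ and $\varphi\in\mathrm{Sym}(I)$, $\varphi R$ is the relation on $\varphi(X)$ with $(a,b)\in\varphi R$ iff $(\varphi^{-1}(a),\varphi^{-1}(b))\in R$. For $p\in\mathcal{P}$, $\varphi\in G^*$, $p^\varphi(z)=\varphi\,p(\varphi^{-1}(z))$. For a permutation $\mu$, $\mu^\varphi=\varphi\mu\varphi^{-1}$; $S^\varphi=\{\mu^\varphi:\mu\in S\}$. A matching mechanism is a correspondence $F$ from $\mathcal{P}$ to $\mathcal{M}$; resolute if $|F(p)|=1$ for all $p$; $U$-symmetric if $F(p^\varphi)=F(p)^\varphi$ for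 all $p$ and $\varphi\in U$. For $U\le G^*$ and $p\in\mathcal{P}$, $\mathrm{Stab}_U(p)=\{\varphi\in U:p^\varphi=p\}$ and $C^U(p)=\{\mu\in\mathcal{M}:\mu^\varphi=\mu \text{ for all }\varphi\in\mathrm{Stab}_U(p)\}$. *)

From mathcomp Require Import all_boot all_order all_fingroup.
Set Implicit Arguments. Unset Strict Implicit. Unset Printing Implicit Defensive.

Local Open Scope group_scope.

Section Defs.
Variable n : nat.

(* Agents: I = {0,...,2n-1}; W = {0..n-1} (paper's 1..n), M = {n..2n-1}
   (paper's n+1..2n). *)
Definition I := 'I_(n + n).
Definition Wset : {set I} := [set i : I | (i < n)%N].
Definition Mset : {set I} := [set i : I | (n <= i)%N].

Definition relI := {ffun I * I -> bool}.

Definition linear_order_on (X : {set I}) (R : relI) : Prop :=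
  [/\ (forall a b, R (a, b) -> a \in X /\ b \in X),
      (forall a, a \in X -> R (a, a)),
      (forall a b, R (a, b) -> R (b, a) -> a = b),
      (forall a b c, R (a, b) -> R (b, c) -> R (a, c)) &
      (forall a b, a \in X -> b \in X -> R (a, b) || R (b, a))].

Definition prof := {ffun I -> relI}.

Definition is_profile (p : prof) : Prop :=
  (forall x, x \in Wset -> linear_order_on Mset (p x)) /\
  (forall y, y \in Mset -> linear_order_on Wset (p y)).

Definition Gstar : {set {perm I}} :=
  [set phi : {perm I} |
     ((phi @: Wset == Wset) && (phi @: Mset == Mset)) ||
     ((phi @: Wset == Mset) && (phi @: Mset == Wset))].

Definition act_rel (phi : {perm I}) (R : relI) : relI :=
  [ffun ab : I * I => R (phi^-1 ab.1, phi^-1 ab.2)].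

Definition act_prof (phi : {perm I}) (p : prof) : prof :=
  [ffun z => act_rel phi (p (phi^-1 z))].

Definition is_matching (mu : {perm I}) : Prop :=
  [/\ mu @: Wset = Mset, mu @: Mset = Wset & forall z, mu (mu z) = z].

(* Conjugation: MathComp's  mu ^ phi = phi^-1 * mu * phi  where
   (s * t) x = t (s x); hence (mu ^ phi) z = phi (mu (phi^-1 z)), i.e. the
   paper's phi mu phi^-1 (right-to-left composition). *)
Lemma conj_permE (mu phi : {perm I}) z : (mu ^ phi) z = phi (mu (phi^-1 z)).
Proof. by rewrite /conjg !permM. Qed.

Definition mechanism (F : prof -> {set {perm I}}) : Prop :=
  forall p, is_profile p -> forall mu, mu \in F p -> is_matching mu.

Definition resolute (F : prof -> {set {perm I}}) : Prop :=
  forall p, is_profile p -> #|F p| = 1%N.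

Definition Usymmetric (U : {set {perm I}}) (F : prof -> {set {perm I}}) : Prop :=
  forall p phi, is_profile p -> phi \in U -> F (act_prof phi p) = F p :^ phi.

Definition refines (H F : prof -> {set {perm I}}) : Prop :=
  forall p, is_profile p -> H p \subset F p.

Definition Stab (U : {set {perm I}}) (p : prof) : {set {perm I}} :=
  [set phi in U | act_prof phi p == p].

Definition CU (U : {set {perm I}}) (p : prof) : {set {perm I}} :=
  [set mu : {perm I} | [&& (mu @: Wset == Mset), (mu @: Mset == Wset),
                          [forall z, mu (mu z) == z] &
                          [forall phi in Stab U p, mu ^ phi == mu]]].

End Defs.

From mathcomp Require Import all_boot all_order all_fingroup.
Set Implicit Arguments. Unset Strict Implicit. Unset Printing Implicit Defensive.

(* Proof idea: a resolute symmetric H must pick at p a matching fixed by every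
   symmetry of p, since for phi in Stab_U(p) we get {H p} = H (p^phi) =
   {H p}^phi.  Conversely, pick a representative r in every U-orbit of profiles
   and a matching mu in F r commuting with Stab_U(r), and set H (r^a) = {mu^a}.
   The elements of U sending r to a given profile form a coset Stab_U(r) a, so
   this is well defined; it is symmetric by construction and refines F because
   F is symmetric. *)

Local Open Scope group_scope.

Section EquivariantSelection.

Variables (gT : finGroupType) (T : finType) (to : {action gT &-> T}).
Variables (U : {group gT}) (P : T -> Prop).

Definition equivariant_on (F : T -> {set gT}) :=
  forall x a, P x -> a \in U -> F (to x a) = F x :^ a.

Definition orbit_rep (x : T) : T := odflt x [pick y in orbit to U x].

Lemma orbit_repP x : exists2 a, a \in U & orbit_rep x = to x a.
Proof.
rewrite /orbit_rep; case: pickP => [y /orbitP[a aU <-] | /(_ x)].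
  by exists a.
by rewrite orbit_refl.
Qed.

Lemma orbit_rep_act x a : a \in U -> orbit_rep (to x a) = orbit_rep x.
Proof.
move=> aU; rewrite /orbit_rep (orbit_act _ _ aU).
by case: pickP => // /(_ x); rewrite orbit_refl.
Qed.

Lemma cent_astab1_act x a :
  a \in U -> 'C('C_U[to x a | to]) = 'C('C_U[x | to]) :^ a.
Proof. by move=> aU; rewrite astab1_act -{1}(conjGid aU) -conjIg centJ. Qed.

Lemma equivariant_resolute_cent H x mu :
  equivariant_on H -> P x -> H x = [set mu] -> mu \in 'C('C_U[x | to]).
Proof.
move=> H_eq Px Hx; apply/centP => a /setIP[aU /astab1P xa].
have := H_eq x a Px aU; rewrite xa Hx conjg_set1 => /set1_inj mu_fixed.
by apply/commgP/conjg_fixP; rewrite -mu_fixed.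
Qed.

Lemma class_amove_cent r x a mu : a \in U -> r = to x a ->
  mu \in 'C('C_U[r | to]) -> mu ^: amove to U r x = [set mu ^ a^-1].
Proof.
move=> aU -> /cent_classP mu_cent.
rewrite -{2}[x](actK to a) amove_act ?groupV ?subsetT //.
by rewrite class_rcoset mu_cent conjg_set1.
Qed.

Variable F : T -> {set gT}.
Hypothesis F_eq : equivariant_on F.

Definition equivariant_selection (x : T) : {set gT} :=
  let r := orbit_rep x in
  if [pick mu in F r :&: 'C('C_U[r | to])] is Some mu
  then mu ^: amove to U r x else set0.

Lemma equivariant_selection_eq : equivariant_on equivariant_selection.
Proof.
move=> x b _ bU; rewrite /equivariant_selection orbit_rep_act //.
case: pickP => [mu /setIP[_ mu_cent] | _]; last by rewrite conj0g.
have [a aU rE] := orbit_repP x.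
have rE' : orbit_rep x = to (to x b) (b^-1 * a) by rewrite -actM mulKVg.
rewrite (class_amove_cent aU rE mu_cent).
have b'aU : b^-1 * a \in U by rewrite groupM ?groupV.
rewrite (class_amove_cent b'aU rE' mu_cent).
by rewrite conjg_set1 invMg invgK conjgM.
Qed.

Lemma equivariant_selection_sub x : P x -> equivariant_selection x \subset F x.
Proof.
move=> Px; rewrite /equivariant_selection.
case: pickP => [mu /setIP[muF mu_cent] | _]; last exact: sub0set.
have [a aU rE] := orbit_repP x.
move: muF; rewrite (class_amove_cent aU rE mu_cent) sub1set rE F_eq //.
by rewrite mem_conjg.
Qed.

Lemma equivariant_selection_card x :
  (forall y, P y -> F y :&: 'C('C_U[y | to]) != set0) ->
  P x -> #|equivariant_selection x| = 1%N.
Proof.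
move=> F_meets_cent Px; rewrite /equivariant_selection.
have [a aU rE] := orbit_repP x.
case: pickP => [mu /setIP[_ mu_cent] | no_mu].
  by rewrite (class_amove_cent aU rE mu_cent) cards1.
have /set0Pn[nu] := F_meets_cent x Px.
by rewrite -(memJ_conjg _ a) conjIg -cent_astab1_act // -F_eq // -rE no_mu.
Qed.

Theorem equivariant_resolute_refinementP :
  (exists H : T -> {set gT},
     [/\ forall x, P x -> H x \subset F x, equivariant_on H
        & forall x, P x -> #|H x| = 1%N])
  <-> (forall x, P x -> F x :&: 'C('C_U[x | to]) != set0).
Proof.
split=> [[H [H_sub H_eq H_card]] x Px | F_meets_cent].
  have /eqP/cards1P[mu Hx] := H_card x Px.
  apply/set0Pn; exists mu; rewrite inE (equivariant_resolute_cent H_eq Px Hx).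
  by rewrite (subsetP (H_sub x Px)) // Hx set11.
exists equivariant_selection; split.
- exact: equivariant_selection_sub.
- exact: equivariant_selection_eq.
- by move=> x; apply: equivariant_selection_card.
Qed.

End EquivariantSelection.

Section ProfileAction.

Variable n : nat.

Lemma act_prof1 (p : prof n) : act_prof 1 p = p.
Proof.
apply/ffunP=> z; apply/ffunP=> [[a b]].
by rewrite /act_prof /act_rel !ffunE invg1 !perm1.
Qed.

Lemma act_profM (p : prof n) (phi psi : {perm I n}) :
  act_prof (phi * psi) p = act_prof psi (act_prof phi p).
Proof.
apply/ffunP=> z; apply/ffunP=> [[a b]].
by rewrite /act_prof /act_rel !ffunE invMg !permM.
Qed.

Definition prof_action :=
  @TotalAction _ _ (fun p phi => act_prof phi p) act_prof1 act_profM.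

Lemma Stab_astab1 (U : {set {perm I n}}) p : Stab U p = 'C_U[p | prof_action].
Proof. by apply/setP=> phi; rewrite inE in_setI (sameP astab1P eqP). Qed.

Lemma CU_cent (U : {set {perm I n}}) p mu :
  is_matching mu -> (mu \in CU U p) = (mu \in 'C(Stab U p)).
Proof.
case=> muW muM mu_inv; rewrite inE muW muM !eqxx /=.
have -> : [forall z, mu (mu z) == z] by apply/forallP=> z; rewrite mu_inv.
apply/forall_inP/centP=> [mu_fix phi /mu_fix | mu_cent phi /mu_cent].
  by move/eqP=> ?; apply/commgP/conjg_fixP.
by move=> ?; apply/eqP/conjg_fixP/commgP.
Qed.

End ProfileAction.

Theorem theorem1 (n : nat) (hn : (2 <= n)%N)
  (U : {group {perm I n}}) (hU : U \subset Gstar n)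
  (F : prof n -> {set {perm I n}})
  (hF : mechanism F) (hFsym : Usymmetric U F) :
  (exists H : prof n -> {set {perm I n}},
      [/\ mechanism H, refines H F, Usymmetric U H & resolute H])
  <->
  (forall p : prof n, is_profile p -> F p :&: CU U p != set0).
Proof.
have F_eq : equivariant_on (prof_action n) U (@is_profile n) F := hFsym.
have FC p :
  is_profile p -> F p :&: CU U p = F p :&: 'C('C_U[p | prof_action n]).
  move=> Pp; apply/setP=> mu; rewrite !in_setI -Stab_astab1.
  by case muF: (mu \in F p) => //=; apply/CU_cent/(hF p Pp mu muF).
have selectionP := equivariant_resolute_refinementP F_eq.
split=> [[H [_ H_sub H_eq H_card]] p Pp | F_meets_CU].
  by rewrite FC //; apply: selectionP.1 p Pp; exists H.
case: selectionP.2 => [p Pp | H [H_sub H_eq H_card]].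
  by rewrite -FC ?F_meets_CU.
by exists H; split=> // p Pp mu /(subsetP (H_sub p Pp)); apply: hF.
Qed.
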